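(* Let $n\in\mathbb{N}$. Then $K_{n,n}$ contains the derived subgroup $[F,F]$ of $F$.
   Context: Thompson's group $F$ is the group of piecewise linear homeomorphisms of $[0,1]$ with finitely many dyadic breakpoints and slopes integer powers of $2$. An element $h\in F$ has the pair of branches $u\rightarrow v$ (for finite binary words $u,v$) if $h(.u\alpha)=.v\alpha$ for every infinite binary word $\alpha$. For $H\le F$ write $u\sim_H v$ if some $h\in H$ has the pair of branches $u\rightarrow v$. The closure $\mathrm{Cl}(H)$ is the subgroup of all $f\in F$ for which there is a finite subdivision of $[0,1]$ into intervals on each of which $f$ coincides with some element of $H$; $H$ is closed if $H=\mathrm{Cl}(H)$ (intersections of closed subgroups are closed). $K_{n,n}$ is the minimal closed subgroup $K$ of $F$ such that: (a) $0^k1\sim_K 0^{k+n}1$ for all $k\in\mathbb{N}$; (b) $1^k0\sim_K 1^{k+n}0$ for all $k\in\mathbb{N}$; (c) $0^k1\sim_K 1^{n+1-k}0$ for $1\le k\le n$; (d) $0^{2k}10\sim_K 1^{1+3(n-k)}0$ for $1\le k\le n$; (e) $0^{2k}11\sim_K 1^{2+3(n-k)}0$ for $1\le k\le n$; (f) $0^{2k-1}1\sim_K 1^{3(n-k+1)}0$ for $1\le k\le n$. *)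

From Stdlib Require Import Reals ZArith List.
From Coquelicot Require Import Coquelicot.
Open Scope R_scope.

(* finite binary words: list bool (false = 0, true = 1);
   infinite binary words: nat -> bool *)
Fixpoint prepend (u : list bool) (a : nat -> bool) : nat -> bool :=
  match u with
  | nil => a
  | b :: u' => fun i => match i with O => b | S j => prepend u' a j end
  end.

Definition bin_val (a : nat -> bool) : R :=
  Series (fun i => if a i then (/ 2) ^ (S i) else 0).

Definition zeros (k : nat) : list bool := repeat false k.
Definition ones (k : nat) : list bool := repeat true k.

Definition dyadic (x : R) : Prop := exists (m : Z) (k : nat), x = IZR m / 2 ^ k.

Definition PL_dyadic (f : R -> R) : Prop :=
  exists (N : nat) (x : nat -> R) (a : nat -> Z) (b : nat -> R),
    x O = 0 /\ x N = 1 /\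
    (forall i, (i <= N)%nat -> dyadic (x i)) /\
    (forall i, (i < N)%nat -> x i < x (S i)) /\
    (forall i, (i < N)%nat -> forall t, x i <= t <= x (S i) ->
        f t = powerRZ 2 (a i) * t + b i).

Definition bij01 (f : R -> R) : Prop :=
  (forall x, 0 <= x <= 1 -> 0 <= f x <= 1) /\
  (forall x y, 0 <= x <= 1 -> 0 <= y <= 1 -> f x = f y -> x = y) /\
  (forall y, 0 <= y <= 1 -> exists x, 0 <= x <= 1 /\ f x = y).

(* Elements of F are represented by functions R -> R which are the identity
   outside [0,1] (so each element of F has a unique representative). *)
Definition inF (f : R -> R) : Prop :=
  (forall t, (t < 0 \/ 1 < t) -> f t = t) /\ bij01 f /\ PL_dyadic f.

Definition comp (f g : R -> R) : R -> R := fun x => f (g x).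

Definition is_subgroup (H : (R -> R) -> Prop) : Prop :=
  (forall f, H f -> inF f) /\
  H (fun x => x) /\
  (forall f g, H f -> H g -> H (comp f g)) /\
  (forall f, H f -> exists g, H g /\ forall x, g (f x) = x).

Definition has_branches (h : R -> R) (u v : list bool) : Prop :=
  forall a : nat -> bool, h (bin_val (prepend u a)) = bin_val (prepend v a).

Definition sim (H : (R -> R) -> Prop) (u v : list bool) : Prop :=
  exists h, H h /\ has_branches h u v.

Definition Cl (H : (R -> R) -> Prop) (f : R -> R) : Prop :=
  inF f /\
  exists (N : nat) (x : nat -> R),
    x O = 0 /\ x N = 1 /\
    (forall i, (i < N)%nat -> x i < x (S i)) /\
    (forall i, (i < N)%nat -> exists h, H h /\
        forall t, x i <= t <= x (S i) -> f t = h t).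

Definition is_closed (H : (R -> R) -> Prop) : Prop :=
  forall f, Cl H f -> H f.

Definition closed_subgroup (H : (R -> R) -> Prop) : Prop :=
  is_subgroup H /\ is_closed H.

Inductive derivedF : (R -> R) -> Prop :=
  | dF_comm : forall a a' b b', inF a -> inF b ->
      (forall x, a' (a x) = x) -> (forall x, b' (b x) = x) ->
      derivedF (comp a' (comp b' (comp a b)))
  | dF_id : derivedF (fun x => x)
  | dF_mul : forall f g, derivedF f -> derivedF g -> derivedF (comp f g)
  | dF_inv : forall f g, derivedF f -> (forall x, g (f x) = x) -> derivedF g.

Definition Knn_conditions (n : nat) (K : (R -> R) -> Prop) : Prop :=
  (forall k, (1 <= k)%nat ->
      sim K (zeros k ++ true :: nil) (zeros (k + n) ++ true :: nil)) /\
  (forall k, (1 <= k)%nat ->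
      sim K (ones k ++ false :: nil) (ones (k + n) ++ false :: nil)) /\
  (forall k, (1 <= k <= n)%nat ->
      sim K (zeros k ++ true :: nil) (ones (n + 1 - k) ++ false :: nil)) /\
  (forall k, (1 <= k <= n)%nat ->
      sim K (zeros (2 * k) ++ true :: false :: nil)
            (ones (1 + 3 * (n - k)) ++ false :: nil)) /\
  (forall k, (1 <= k <= n)%nat ->
      sim K (zeros (2 * k) ++ true :: true :: nil)
            (ones (2 + 3 * (n - k)) ++ false :: nil)) /\
  (forall k, (1 <= k <= n)%nat ->
      sim K (zeros (2 * k - 1) ++ true :: nil)
            (ones (3 * (n - k + 1)) ++ false :: nil)).

Definition is_Knn (n : nat) (K : (R -> R) -> Prop) : Prop :=
  closed_subgroup K /\ Knn_conditions n K /\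
  (forall K', closed_subgroup K' -> Knn_conditions n K' ->
     (forall f, K' f -> K f) -> forall f, K f -> K' f).

From Stdlib Require Import Reals ZArith List.
From Coquelicot Require Import Coquelicot.
From Stdlib Require Import Lra Lia IndefiniteDescription.
Open Scope R_scope.

(* An element of [F,F] is the identity near 0 and near 1.  On a fine enough dyadic
   grid such an f maps every standard dyadic interval [.w] (|w| = N) affinely onto a
   standard dyadic interval [.w'], is the identity on the first and the last one, and
   on every other one both w and w' contain both letters.  So it suffices that any two
   such words are ~_K: then f agrees piecewise with elements of K and lies in K, which
   is closed.  Coding the class of 0^j 1 by j - 1 mod n and that of 1^j 0 by -j,
   conditions (a)-(f) say that the induced equivalence on Z is n-periodic, relates 2v
   to 3v, and relates 3v+1 to 3w+1 and 3v+2 to 3w+2 whenever it relates 2v+1 to 2w+1.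
   Halving the period, or dividing it by 3, and a direct computation once it is prime
   to 6, show that such an equivalence relates everything. *)

(** * Binary expansions *)

Fixpoint word_value (u : list bool) : R :=
  match u with nil => 0 | b :: u' => (if b then / 2 else 0) + word_value u' / 2 end.

Definition digit_term (a : nat -> bool) (i : nat) : R := if a i then (/ 2) ^ S i else 0.

Lemma ex_series_digit_term a : ex_series (digit_term a).
Proof.
  apply (@ex_series_le R_AbsRing R_CompleteNormedModule _ (fun i => (/ 2) ^ i)).
  - intro i. change (norm (digit_term a i)) with (Rabs (digit_term a i)).
    assert (0 < (/ 2) ^ i) by (apply pow_lt; lra).
    unfold digit_term; destruct (a i); simpl; rewrite ?Rabs_R0, ?Rabs_pos_eq; lra.
  - apply ex_series_geom. rewrite Rabs_pos_eq; lra.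
Qed.

Lemma bin_val_cons a :
  bin_val a = (if a 0%nat then / 2 else 0) + bin_val (fun k => a (S k)) / 2.
Proof.
  unfold bin_val. fold (digit_term a) (digit_term (fun k => a (S k))).
  rewrite (Series_incr_1 _ (ex_series_digit_term a)).
  rewrite (Series_ext (fun k => digit_term a (S k))
             (fun k => / 2 * digit_term (fun k => a (S k)) k)).
  - rewrite Series_scal_l. unfold digit_term at 1. destruct (a 0%nat); simpl; lra.
  - intro k. unfold digit_term. destruct (a (S k)); simpl; lra.
Qed.

Lemma bin_val_prepend u a :
  bin_val (prepend u a) = word_value u + bin_val a / 2 ^ length u.
Proof.
  induction u as [|b u IH]; simpl.
  - lra.
  - rewrite bin_val_cons. simpl.
    change (bin_val (fun k => prepend u a k)) with (bin_val (prepend u a)). rewrite IH.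
    assert (0 < 2 ^ length u) by (apply pow_lt; lra). field. lra.
Qed.

Lemma prepend_app u w a : prepend (u ++ w) a = prepend u (prepend w a).
Proof. induction u as [|b u IH]; simpl; [reflexivity | now rewrite IH]. Qed.

Fixpoint binary_rest (s : R) (i : nat) : R :=
  match i with
  | O => s
  | S j => let t := binary_rest s j in if Rle_dec 1 (2 * t) then 2 * t - 1 else 2 * t
  end.

Definition binary_digit (s : R) (i : nat) : bool :=
  if Rle_dec 1 (2 * binary_rest s i) then true else false.

Lemma binary_rest_range s i : 0 <= s <= 1 -> 0 <= binary_rest s i <= 1.
Proof.
  intro Hs; induction i as [|i IH]; simpl; auto.
  destruct (Rle_dec 1 (2 * binary_rest s i)); lra.
Qed.

Lemma binary_partial_sum s m :
  sum_f_R0 (digit_term (binary_digit s)) m + binary_rest s (S m) / 2 ^ S m = s.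
Proof.
  assert (step : forall i, digit_term (binary_digit s) i + binary_rest s (S i) / 2 ^ S i
                           = binary_rest s i / 2 ^ i).
  { intro i. unfold digit_term, binary_digit. simpl.
    assert (0 < 2 ^ i) by (apply pow_lt; lra).
    rewrite pow_inv.
    destruct (Rle_dec 1 (2 * binary_rest s i)); simpl; field; lra. }
  induction m as [|m IH].
  - specialize (step 0%nat). simpl in *. lra.
  - simpl sum_f_R0. specialize (step (S m)). lra.
Qed.

Lemma bin_val_onto s : 0 <= s <= 1 -> exists a, bin_val a = s.
Proof.
  intro Hs. exists (binary_digit s). unfold bin_val. fold (digit_term (binary_digit s)).
  apply is_series_unique, is_series_Reals. intros eps Heps.
  destruct (pow_lt_1_zero (/ 2)) with (y := eps) as [N HN]; [rewrite Rabs_pos_eq; lra | lra |].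
  exists N. intros m Hm. unfold R_dist.
  specialize (HN (S m) ltac:(lia)).
  rewrite Rabs_pos_eq, pow_inv in HN by (apply pow_le; lra).
  pose proof (binary_partial_sum s m). pose proof (binary_rest_range s (S m) Hs).
  assert (0 < 2 ^ S m) by (apply pow_lt; lra).
  assert (0 <= binary_rest s (S m) / 2 ^ S m <= / 2 ^ S m).
  { split; [apply Rle_mult_inv_pos; lra |].
    unfold Rdiv. rewrite <- (Rmult_1_l (/ 2 ^ S m)) at 2.
    apply Rmult_le_compat_r; [left; apply Rinv_0_lt_compat |]; lra. }
  rewrite Rabs_left1; lra.
Qed.

(** * Periodic equivalences on the integers *)

Section PeriodicRelation.
Local Open Scope Z_scope.

(* Modulo [2 h - 1], [3 u] inverts 3 and [2 h] inverts 2, so [2 u^2] inverts the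
   coefficient [9 h] of [v]. *)
Lemma triple_affine_onto h u k z : 3 * u = k * (2 * h - 1) + 1 ->
  exists v t, 3 * h * (3 * (v - h) + 1) = z + t * (2 * h - 1).
Proof.
  intro Hu. set (w := z + 9 * h * h - 3 * h).
  exists (2 * u * u * w), (w * (9 * u * u + k * (3 * u + 1))).
  assert (Hu2 : 9 * u * u = k * (2 * h - 1) * (3 * u + 1) + 1) by nia.
  transitivity (9 * u * u * w * (2 * h) - w + z); [unfold w; ring |].
  replace (2 * h) with ((2 * h - 1) + 1) at 1 by ring. rewrite Hu2. ring.
Qed.

Variable E : Z -> Z -> Prop.
Hypothesis E_refl : forall x, E x x.
Hypothesis E_sym : forall x y, E x y -> E y x.
Hypothesis E_trans : forall x y z, E x y -> E y z -> E x z.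
Hypothesis E_double_triple : forall v, E (2 * v) (3 * v).
Hypothesis E_odd : forall v w, E (2 * v + 1) (2 * w + 1) ->
  E (3 * v + 1) (3 * w + 1) /\ E (3 * v + 2) (3 * w + 2).

Definition period (d : Z) : Prop := forall x, E x (x + d).

Lemma E_of_eq x y : x = y -> E x y.
Proof. intros ->; apply E_refl. Qed.

Lemma period_opp d : period d -> period (- d).
Proof.
  intros Hd x. apply E_sym. specialize (Hd (x - d)).
  now replace (x - d + d) with x in Hd by ring.
Qed.

Lemma period_add d d' : period d -> period d' -> period (d + d').
Proof.
  intros Hd Hd' x. apply E_trans with (x + d); [apply Hd |].
  replace (x + (d + d')) with (x + d + d') by ring. apply Hd'.
Qed.

Lemma period_mul d t : period d -> period (t * d).
Proof.
  intro Hd.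
  assert (Hnat : forall k : nat, period (Z.of_nat k * d)).
  { induction k as [|k IH].
    - intro x. apply E_of_eq. ring.
    - replace (Z.of_nat (S k) * d) with (Z.of_nat k * d + d) by lia. now apply period_add. }
  destruct (Z_le_gt_dec 0 t).
  - replace t with (Z.of_nat (Z.to_nat t)) by lia. apply Hnat.
  - replace (t * d) with (- (Z.of_nat (Z.to_nat (- t)) * d)) by lia. apply period_opp, Hnat.
Qed.

Lemma period_one_total : period 1 -> forall x y, E x y.
Proof. intros H x y. replace y with (x + (y - x) * 1) by ring. now apply period_mul. Qed.

Lemma E_shift_double v d : period (3 * d) -> E (2 * v) (2 * v + 2 * d).
Proof.
  intro H3. apply E_trans with (3 * v); [apply E_double_triple |].
  apply E_trans with (3 * v + 3 * d); [apply H3 |].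
  apply E_sym. replace (2 * v + 2 * d) with (2 * (v + d)) by ring.
  replace (3 * v + 3 * d) with (3 * (v + d)) by ring. apply E_double_triple.
Qed.

Lemma period_half d : period (2 * d) -> period d.
Proof.
  intro H2.
  assert (H3 : period (3 * d)).
  { intro y. pose proof (Z.div_mod y 3 ltac:(lia)) as Hy.
    set (v := y / 3) in *.
    assert (Hr : y mod 3 = 0 \/ y mod 3 = 1 \/ y mod 3 = 2)
      by (pose proof (Z.mod_pos_bound y 3); lia).
    destruct Hr as [Hr | [Hr | Hr]]; rewrite Hr in Hy.
    - apply E_trans with (2 * v); [apply E_sym; rewrite Hy, Z.add_0_r; apply E_double_triple |].
      apply E_trans with (2 * v + 2 * d); [apply H2 |].
      replace (2 * v + 2 * d) with (2 * (v + d)) by ring.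
      replace (y + 3 * d) with (3 * (v + d)) by lia. apply E_double_triple.
    - replace (y + 3 * d) with (3 * (v + d) + 1) by lia. rewrite Hy.
      apply (E_odd v (v + d)).
      replace (2 * (v + d) + 1) with (2 * v + 1 + 2 * d) by ring. apply H2.
    - replace (y + 3 * d) with (3 * (v + d) + 2) by lia. rewrite Hy.
      apply (E_odd v (v + d)).
      replace (2 * (v + d) + 1) with (2 * v + 1 + 2 * d) by ring. apply H2. }
  replace d with (3 * d + - (2 * d)) by ring. now apply period_add, period_opp.
Qed.

Lemma period_two_thirds m d : period (2 * m + 1) -> period (3 * d) -> period (2 * d).
Proof.
  intros Hn H3 y. destruct (Z.Even_or_Odd y) as [[v ->] | [v ->]].
  - now apply E_shift_double.
  - apply E_trans with (2 * v + 1 + (2 * m + 1)); [apply Hn |].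
    apply E_trans with (2 * v + 1 + 2 * d + (2 * m + 1)); [| apply E_sym, Hn].
    replace (2 * v + 1 + (2 * m + 1)) with (2 * (v + m + 1)) by ring.
    replace (2 * v + 1 + 2 * d + (2 * m + 1)) with (2 * (v + m + 1) + 2 * d) by ring.
    now apply E_shift_double.
Qed.

Section CoprimeToSix.
Variable h : Z.
Hypothesis period_n : period (2 * h - 1).

Lemma E_mul_3h y : E y (3 * h * y).
Proof.
  apply E_trans with (2 * (h * y)).
  - replace (2 * (h * y)) with (y + y * (2 * h - 1)) by ring. now apply period_mul.
  - replace (3 * h * y) with (3 * (h * y)) by ring. apply E_double_triple.
Qed.

(* [2 (v - h) + 1] and [2 (h (3 v - 1)) + 1] are both related to [2 v], hence their
   images [3 (v - h) + 1] and [3 h (3 v - 1) + 1] are related; the latter exceeds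
   [3 h (3 (v - h) + 1)], which is related to the former, by [(3 h - 1)^2]. *)
Lemma E_shift_square v :
  E (3 * h * (3 * (v - h) + 1)) (3 * h * (3 * (v - h) + 1) + (3 * h - 1) * (3 * h - 1)).
Proof.
  set (a := v - h). set (b := h * (3 * v - 1)).
  assert (Hab : E (2 * a + 1) (2 * b + 1)).
  { apply E_trans with (2 * v).
    - replace (2 * v) with (2 * a + 1 + 1 * (2 * h - 1)) by (unfold a; ring). now apply period_mul.
    - apply E_trans with (3 * v); [apply E_double_triple |].
      replace (2 * b + 1) with (3 * v + (3 * v - 1) * (2 * h - 1)) by (unfold b; ring).
      now apply period_mul. }
  apply E_trans with (3 * a + 1); [apply E_sym, E_mul_3h |].
  replace (3 * h * (3 * a + 1) + (3 * h - 1) * (3 * h - 1)) with (3 * b + 1) by (unfold a, b; ring).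
  now apply (E_odd a b).
Qed.

Hypothesis not_3_dvd_n : (2 * h - 1) mod 3 <> 0.

Lemma period_square : period ((3 * h - 1) * (3 * h - 1)).
Proof.
  assert (Hu : exists u k, 3 * u = k * (2 * h - 1) + 1).
  { pose proof (Z.div_mod (2 * h - 1) 3 ltac:(lia)).
    pose proof (Z.mod_pos_bound (2 * h - 1) 3 ltac:(lia)).
    assert ((2 * h - 1) mod 3 = 1 \/ (2 * h - 1) mod 3 = 2) as [R | R] by lia.
    - exists (2 * ((2 * h - 1) / 3) + 1), 2. lia.
    - exists ((2 * h - 1) / 3 + 1), 1. lia. }
  destruct Hu as [u [k Hu]].
  intro z.
  destruct (triple_affine_onto h u k z Hu) as [v [t Hz]].
  apply E_trans with (z + t * (2 * h - 1)); [now apply period_mul |].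
  rewrite <- Hz. eapply E_trans; [apply E_shift_square |].
  rewrite Hz. replace (z + t * (2 * h - 1) + (3 * h - 1) * (3 * h - 1))
    with (z + (3 * h - 1) * (3 * h - 1) + t * (2 * h - 1)) by ring.
  apply E_sym. now apply period_mul.
Qed.

Lemma period_one : period 1.
Proof.
  replace 1 with (4 * ((3 * h - 1) * (3 * h - 1)) + - (18 * h - 3) * (2 * h - 1)) by ring.
  apply period_add; apply period_mul; [apply period_square | apply period_n].
Qed.

End CoprimeToSix.

Theorem period_total n : 1 <= n -> period n -> forall x y, E x y.
Proof.
  intro Hn. assert (H0 : 0 <= n) by lia. revert Hn.
  pattern n. apply Z_lt_induction; [| exact H0]. clear n H0.
  intros n IH Hn Hper.
  destruct (Z.eq_dec n 1) as [-> | Hn1]; [now apply period_one_total |].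
  destruct (Z.Even_or_Odd n) as [[m ->] | [m ->]].
  - apply (IH m); [lia | lia | now apply period_half].
  - destruct (Z.eq_dec ((2 * m + 1) mod 3) 0) as [H3 | H3].
    + pose proof (Z.div_mod (2 * m + 1) 3 ltac:(lia)) as Hq. rewrite H3, Z.add_0_r in Hq.
      set (q := (2 * m + 1) / 3) in *.
      apply (IH q); [lia | lia |].
      apply period_half, (period_two_thirds m); [exact Hper | now rewrite <- Hq].
    + replace (2 * m + 1) with (2 * (m + 1) - 1) in Hper, H3 by ring.
      exact (period_one_total (period_one (m + 1) Hper H3)).
Qed.

End PeriodicRelation.

(** * Words identified by conditions (a)-(f) *)

Section SimEquivalence.
Variable K : (R -> R) -> Prop.
Hypothesis K_subgroup : is_subgroup K.

Lemma sim_refl u : sim K u u.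
Proof. destruct K_subgroup as [_ [Hid _]]. exists (fun x => x). split; [exact Hid | now intro]. Qed.

Lemma sim_sym u v : sim K u v -> sim K v u.
Proof.
  intros [h [Kh Bh]]. destruct K_subgroup as [_ [_ [_ Hinv]]].
  destruct (Hinv h Kh) as [g [Kg Hg]]. exists g; split; [exact Kg |].
  intro a. rewrite <- (Bh a). apply Hg.
Qed.

Lemma sim_trans u v w : sim K u v -> sim K v w -> sim K u w.
Proof.
  intros [h [Kh Bh]] [g [Kg Bg]]. destruct K_subgroup as [_ [_ [Hcomp _]]].
  exists (comp g h); split; [now apply Hcomp |]. intro a. unfold comp. now rewrite Bh.
Qed.

End SimEquivalence.

Lemma sim_app_r K u v w : sim K u v -> sim K (u ++ w) (v ++ w).
Proof.
  intros [h [Kh Bh]]. exists h; split; [exact Kh |]. intro a. rewrite !prepend_app. apply Bh.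
Qed.

Definition run (b : bool) (j : nat) : list bool := repeat b j ++ negb b :: nil.

Lemma run_snoc b j c : run b j ++ c :: nil = repeat b j ++ negb b :: c :: nil.
Proof. unfold run. now rewrite <- app_assoc. Qed.

Lemma split_first_other b u : In (negb b) u -> exists j w, u = repeat b j ++ negb b :: w.
Proof.
  induction u as [|c u IH]; [intros [] |].
  destruct (Bool.bool_dec c (negb b)) as [-> | Hc]; intro Hin.
  - now exists 0%nat, u.
  - destruct Hin as [Hcb | Hin]; [congruence |].
    destruct (IH Hin) as [j [w ->]]. exists (S j), w. simpl. f_equal. now destruct b, c.
Qed.

Lemma mixed_word_split u : In true u -> In false u ->
  exists b j w, (1 <= j)%nat /\ u = run b j ++ w.
Proof.
  destruct u as [|c u]; [intros [] |]. intros Ht Hf.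
  assert (Hu : In (negb c) u) by (destruct c; simpl in *; destruct Ht, Hf; easy).
  destruct (split_first_other c u Hu) as [j [w ->]].
  exists c, (S j), w. split; [lia |]. unfold run. simpl. now rewrite <- app_assoc.
Qed.

Section RunClasses.
Variable n : nat.
Hypothesis n_pos : (1 <= n)%nat.
Variable K : (R -> R) -> Prop.
Hypothesis K_subgroup : is_subgroup K.
Hypothesis K_conditions : Knn_conditions n K.

Local Notation nz := (Z.of_nat n).
Local Notation sim_trans := (sim_trans K K_subgroup).
Local Notation sim_sym := (sim_sym K K_subgroup).

Lemma sim_run_add b j t : (1 <= j)%nat -> sim K (run b j) (run b (j + t * n)).
Proof.
  intro Hj. induction t as [|t IH].
  - rewrite Nat.mul_0_l, Nat.add_0_r. apply sim_refl, K_subgroup.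
  - apply sim_trans with (run b (j + t * n)); [exact IH |].
    replace (j + S t * n)%nat with (j + t * n + n)%nat by lia.
    destruct K_conditions as [Ha [Hb _]].
    destruct b; [apply Hb | apply Ha]; lia.
Qed.

Lemma sim_run_residue b j : (1 <= j)%nat ->
  sim K (run b j) (run b (Z.to_nat ((Z.of_nat j - 1) mod nz) + 1)).
Proof.
  intro Hj.
  pose proof (Z.div_mod (Z.of_nat j - 1) nz ltac:(lia)).
  pose proof (Z.mod_pos_bound (Z.of_nat j - 1) nz ltac:(lia)).
  assert (0 <= (Z.of_nat j - 1) / nz)%Z by (apply Z.div_pos; lia).
  remember ((Z.of_nat j - 1) mod nz)%Z as r. remember ((Z.of_nat j - 1) / nz)%Z as q.
  apply sim_sym.
  replace (run b j) with (run b (Z.to_nat r + 1 + Z.to_nat q * n)) by (f_equal; nia).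
  apply sim_run_add. lia.
Qed.

Definition cls (x : Z) : list bool := run false (Z.to_nat (x mod nz) + 1).

Lemma cls_shift x t : cls (x + t * nz) = cls x.
Proof. unfold cls. now rewrite Z_mod_plus_full. Qed.

Lemma sim_run_false_cls j : (1 <= j)%nat -> sim K (run false j) (cls (Z.of_nat j - 1)).
Proof. apply sim_run_residue. Qed.

Lemma sim_run_true_cls j : (1 <= j)%nat -> sim K (run true j) (cls (- Z.of_nat j)).
Proof.
  intro Hj.
  pose proof (Z.div_mod (Z.of_nat j - 1) nz ltac:(lia)).
  pose proof (Z.mod_pos_bound (Z.of_nat j - 1) nz ltac:(lia)).
  apply sim_trans with (run true (Z.to_nat ((Z.of_nat j - 1) mod nz) + 1));
    [now apply sim_run_residue |].
  remember ((Z.of_nat j - 1) mod nz)%Z as r. remember ((Z.of_nat j - 1) / nz)%Z as q.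
  apply sim_trans with (run false (n - Z.to_nat r)).
  { apply sim_sym. destruct K_conditions as [_ [_ [Hc _]]].
    specialize (Hc (n - Z.to_nat r)%nat ltac:(lia)).
    now replace (n + 1 - (n - Z.to_nat r))%nat with (Z.to_nat r + 1)%nat in Hc by lia. }
  apply sim_trans with (cls (Z.of_nat (n - Z.to_nat r) - 1)); [apply sim_run_false_cls; lia |].
  replace (- Z.of_nat j)%Z with (Z.of_nat (n - Z.to_nat r) - 1 + (- (q + 1)) * nz)%Z by nia.
  rewrite cls_shift. apply sim_refl, K_subgroup.
Qed.

Lemma cls_double_triple v : sim K (cls (2 * v)) (cls (3 * v)).
Proof.
  pose proof (Z.div_mod v nz ltac:(lia)). pose proof (Z.mod_pos_bound v nz ltac:(lia)).
  remember (v mod nz)%Z as r. remember (v / nz)%Z as q.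
  set (k := (Z.to_nat r + 1)%nat).
  destruct K_conditions as [_ [_ [_ [_ [_ Hf]]]]].
  apply sim_trans with (run false (2 * k - 1)).
  { replace (2 * v)%Z with (Z.of_nat (2 * k - 1) - 1 + (2 * q) * nz)%Z by (unfold k; nia).
    rewrite cls_shift. apply sim_sym, sim_run_false_cls. lia. }
  apply sim_trans with (run true (3 * (n - k + 1))); [apply Hf; unfold k; lia |].
  replace (3 * v)%Z with (- Z.of_nat (3 * (n - k + 1)) + (3 * q + 3) * nz)%Z by (unfold k; nia).
  rewrite cls_shift. apply sim_run_true_cls. lia.
Qed.

Lemma run_of_odd v : exists j,
  sim K (run false j) (cls (2 * v + 1)) /\
  sim K (run false j ++ true :: nil) (cls (3 * v + 1)) /\
  sim K (run false j ++ false :: nil) (cls (3 * v + 2)).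
Proof.
  pose proof (Z.div_mod v nz ltac:(lia)). pose proof (Z.mod_pos_bound v nz ltac:(lia)).
  remember (v mod nz)%Z as r. remember (v / nz)%Z as q.
  set (k := (Z.to_nat r + 1)%nat). exists (2 * k)%nat.
  destruct K_conditions as [_ [_ [_ [Hd [He _]]]]].
  rewrite !run_snoc. split; [| split].
  - replace (2 * v + 1)%Z with (Z.of_nat (2 * k) - 1 + (2 * q) * nz)%Z by (unfold k; nia).
    rewrite cls_shift. apply sim_run_false_cls. lia.
  - apply sim_trans with (run true (2 + 3 * (n - k))); [apply He; unfold k; lia |].
    replace (3 * v + 1)%Z with (- Z.of_nat (2 + 3 * (n - k)) + (3 * q + 3) * nz)%Z
      by (unfold k; nia).
    rewrite cls_shift. apply sim_run_true_cls. lia.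
  - apply sim_trans with (run true (1 + 3 * (n - k))); [apply Hd; unfold k; lia |].
    replace (3 * v + 2)%Z with (- Z.of_nat (1 + 3 * (n - k)) + (3 * q + 3) * nz)%Z
      by (unfold k; nia).
    rewrite cls_shift. apply sim_run_true_cls. lia.
Qed.

Lemma cls_odd v w : sim K (cls (2 * v + 1)) (cls (2 * w + 1)) ->
  sim K (cls (3 * v + 1)) (cls (3 * w + 1)) /\ sim K (cls (3 * v + 2)) (cls (3 * w + 2)).
Proof.
  intro Hvw.
  destruct (run_of_odd v) as [j [Hj [Hj1 Hj2]]]. destruct (run_of_odd w) as [l [Hl [Hl1 Hl2]]].
  assert (Hjl : sim K (run false j) (run false l)).
  { apply sim_trans with (cls (2 * v + 1)); [exact Hj |].
    apply sim_trans with (cls (2 * w + 1)); [exact Hvw | now apply sim_sym]. }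
  split.
  - apply sim_trans with (run false j ++ true :: nil); [now apply sim_sym |].
    apply sim_trans with (run false l ++ true :: nil); [now apply sim_app_r | exact Hl1].
  - apply sim_trans with (run false j ++ false :: nil); [now apply sim_sym |].
    apply sim_trans with (run false l ++ false :: nil); [now apply sim_app_r | exact Hl2].
Qed.

Lemma cls_total x y : sim K (cls x) (cls y).
Proof.
  apply (period_total (fun x y => sim K (cls x) (cls y))) with nz.
  - intro. apply sim_refl, K_subgroup.
  - intros a b. apply sim_sym.
  - intros a b c. apply sim_trans.
  - apply cls_double_triple.
  - apply cls_odd.
  - lia.
  - intro z. rewrite <- (Z.mul_1_l nz), cls_shift. apply sim_refl, K_subgroup.
Qed.

Lemma sim_run b j : (1 <= j)%nat -> sim K (run b j) (run false 2).
Proof.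
  intro Hj. apply sim_trans with (cls (Z.of_nat 2 - 1)); [| apply sim_sym, sim_run_false_cls; lia].
  destruct b.
  - apply sim_trans with (cls (- Z.of_nat j)); [now apply sim_run_true_cls | apply cls_total].
  - apply sim_trans with (cls (Z.of_nat j - 1)); [now apply sim_run_false_cls | apply cls_total].
Qed.

Lemma sim_run2_app w : sim K (run false 2 ++ w) (run false 2).
Proof.
  destruct K_conditions as [_ [_ [_ [Hd [He _]]]]].
  induction w as [|c w IH]; [rewrite app_nil_r; apply sim_refl, K_subgroup |].
  apply sim_trans with (run false 2 ++ w); [| exact IH].
  replace (run false 2 ++ c :: w) with ((run false 2 ++ c :: nil) ++ w)
    by now rewrite <- app_assoc.
  apply sim_app_r. rewrite run_snoc. destruct c.
  - apply sim_trans with (run true (2 + 3 * (n - 1))); [apply (He 1%nat); lia | apply sim_run; lia].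
  - apply sim_trans with (run true (1 + 3 * (n - 1))); [apply (Hd 1%nat); lia | apply sim_run; lia].
Qed.

Lemma sim_mixed_run2 u : In true u -> In false u -> sim K u (run false 2).
Proof.
  intros Ht Hf. destruct (mixed_word_split u Ht Hf) as [b [j [w [Hj ->]]]].
  apply sim_trans with (run false 2 ++ w); [apply sim_app_r, sim_run, Hj | apply sim_run2_app].
Qed.

Theorem sim_mixed u v : In true u -> In false u -> In true v -> In false v -> sim K u v.
Proof.
  intros. apply sim_trans with (run false 2); [| apply sim_sym]; now apply sim_mixed_run2.
Qed.

End RunClasses.

(** * Standard dyadic intervals *)

Definition pow2 (N : nat) : Z := (2 ^ Z.of_nat N)%Z.

Lemma IZR_pow2 N : IZR (pow2 N) = 2 ^ N.
Proof. unfold pow2. now rewrite <- pow_IZR. Qed.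

Lemma pow2_pos N : (0 < pow2 N)%Z.
Proof. apply Z.pow_pos_nonneg; lia. Qed.

Lemma pow2_S N : pow2 (S N) = (2 * pow2 N)%Z.
Proof. unfold pow2. rewrite Nat2Z.inj_succ, Z.pow_succ_r by lia. reflexivity. Qed.

Lemma pow2_add N d : pow2 (N + d) = (pow2 N * pow2 d)%Z.
Proof. unfold pow2. rewrite Nat2Z.inj_add, Z.pow_add_r by lia. reflexivity. Qed.

Lemma two_pow_pos N : 0 < 2 ^ N.
Proof. apply pow_lt; lra. Qed.

Lemma powerRZ_two_pow a (M L : nat) : (a + Z.of_nat M)%Z = Z.of_nat L ->
  powerRZ 2 a * 2 ^ M = 2 ^ L.
Proof.
  intro H. rewrite !pow_powerRZ, <- powerRZ_add by lra. now rewrite H.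
Qed.


(* [in_cell N i t] says [t] lies in [[i / 2^N, (i + 1) / 2^N]], and [maps_cell f N i M p]
   that [f] maps this interval affinely and increasingly onto [[p / 2^M, (p + 1) / 2^M]]. *)
Definition in_cell (N : nat) (i : Z) (t : R) : Prop := IZR i <= t * 2 ^ N <= IZR i + 1.

Definition maps_cell (f : R -> R) (N : nat) (i : Z) (M : nat) (p : Z) : Prop :=
  forall t, in_cell N i t -> f t * 2 ^ M = t * 2 ^ N - IZR i + IZR p.

Definition cell_affine (f : R -> R) (N L : nat) : Prop :=
  forall i, (0 <= i < pow2 N)%Z -> exists M p, (L <= M)%nat /\ maps_cell f N i M p.

Lemma in_cell_left N i : in_cell N i (IZR i / 2 ^ N).
Proof.
  pose proof (two_pow_pos N). unfold in_cell.
  replace (IZR i / 2 ^ N * 2 ^ N) with (IZR i) by (field; lra). lra.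
Qed.

Lemma in_cell_right N i : in_cell N i ((IZR i + 1) / 2 ^ N).
Proof.
  pose proof (two_pow_pos N). unfold in_cell.
  replace ((IZR i + 1) / 2 ^ N * 2 ^ N) with (IZR i + 1) by (field; lra). lra.
Qed.

Lemma in_cell_unit N i t : (0 <= i < pow2 N)%Z -> in_cell N i t -> 0 <= t <= 1.
Proof.
  intros Hi [H1 H2]. pose proof (two_pow_pos N).
  assert (0 <= IZR i) by (apply IZR_le; lia).
  assert (IZR i + 1 <= 2 ^ N) by (rewrite <- IZR_pow2, <- plus_IZR; apply IZR_le; lia).
  split; nra.
Qed.

Lemma grid_last N : INR (Z.to_nat (pow2 N)) / 2 ^ N = 1.
Proof.
  pose proof (two_pow_pos N). pose proof (pow2_pos N).
  rewrite INR_IZR_INZ, Z2Nat.id, IZR_pow2 by lia. field. lra.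
Qed.

Lemma grid_lt N j : INR j / 2 ^ N < INR (S j) / 2 ^ N.
Proof.
  pose proof (two_pow_pos N). rewrite S_INR.
  apply Rmult_lt_compat_r; [apply Rinv_0_lt_compat |]; lra.
Qed.

Lemma in_cell_grid N j t : INR j / 2 ^ N <= t <= INR (S j) / 2 ^ N -> in_cell N (Z.of_nat j) t.
Proof.
  pose proof (two_pow_pos N). rewrite S_INR. unfold in_cell. rewrite <- INR_IZR_INZ.
  intros [Ht1 Ht2]. apply Rle_div_l in Ht1; [| lra]. apply Rle_div_r in Ht2; [| lra]. lra.
Qed.

Lemma cell_of N t : 0 <= t <= 1 -> exists i, (0 <= i < pow2 N)%Z /\ in_cell N i t.
Proof.
  intro Ht. induction N as [|N [i [Hi [H1 H2]]]].
  - exists 0%Z. unfold in_cell, pow2. simpl. split; [lia | lra].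
  - rewrite pow2_S. unfold in_cell. simpl pow.
    destruct (Rle_dec (t * (2 * 2 ^ N)) (2 * IZR i + 1)).
    + exists (2 * i)%Z. rewrite mult_IZR. split; [lia | lra].
    + exists (2 * i + 1)%Z. rewrite plus_IZR, mult_IZR. split; [lia | lra].
Qed.

Lemma IZR_div_mod i e :
  IZR i = IZR (i / pow2 e) * 2 ^ e + IZR (i mod pow2 e).
Proof.
  rewrite <- IZR_pow2, <- mult_IZR, <- plus_IZR. f_equal.
  rewrite Z.mul_comm. apply Z.div_mod. pose proof (pow2_pos e). lia.
Qed.

Lemma in_cell_parent N e i t : in_cell (N + e) i t -> in_cell N (i / pow2 e) t.
Proof.
  pose proof (Z.mod_pos_bound i (pow2 e) (pow2_pos e)) as Hr.
  assert (0 <= IZR (i mod pow2 e)) by (apply IZR_le; lia).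
  assert (IZR (i mod pow2 e) + 1 <= 2 ^ e) by (rewrite <- IZR_pow2, <- plus_IZR; apply IZR_le; lia).
  pose proof (two_pow_pos e).
  unfold in_cell. rewrite pow_add, (IZR_div_mod i e). intros [Hlo Hhi]. split; nra.
Qed.

Lemma maps_cell_child f N e i M p : maps_cell f N (i / pow2 e) M p ->
  maps_cell f (N + e) i (M + e) (p * pow2 e + i mod pow2 e).
Proof.
  intros Hf t Ht. pose proof (Hf t (in_cell_parent N e i t Ht)) as E.
  rewrite !pow_add, <- Rmult_assoc, E, (IZR_div_mod i e), plus_IZR, mult_IZR, IZR_pow2. ring.
Qed.

Lemma maps_cell_image f N i M p t : maps_cell f N i M p -> in_cell N i t -> in_cell M p (f t).
Proof. intros Hf Ht. unfold in_cell. rewrite (Hf t Ht). destruct Ht; lra. Qed.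

Lemma maps_cell_comp f g N i M p M' q :
  maps_cell g N i M p -> maps_cell f M p M' q -> maps_cell (comp f g) N i M' q.
Proof.
  intros Hg Hf t Ht. unfold comp.
  rewrite (Hf (g t) (maps_cell_image g N i M p t Hg Ht)), (Hg t Ht). ring.
Qed.

Lemma maps_cell_inv f g N i M p : maps_cell f N i M p -> (forall x, g (f x) = x) ->
  maps_cell g M p N i.
Proof.
  intros Hf Hg s Hs. pose proof (two_pow_pos N). pose proof (two_pow_pos M).
  set (x := (s * 2 ^ M - IZR p + IZR i) / 2 ^ N).
  assert (Ex : x * 2 ^ N = s * 2 ^ M - IZR p + IZR i) by (unfold x; field; lra).
  assert (Hx : in_cell N i x) by (unfold in_cell; rewrite Ex; destruct Hs; lra).
  assert (Hfx : f x = s).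
  { apply (Rmult_eq_reg_r (2 ^ M)); [| lra]. rewrite (Hf x Hx), Ex. ring. }
  replace (g s) with x by (rewrite <- Hfx; symmetry; apply Hg). exact Ex.
Qed.

Lemma maps_cell_range f N i M p : (0 <= i < pow2 N)%Z -> maps_cell f N i M p ->
  (forall t, 0 <= t <= 1 -> 0 <= f t <= 1) -> (0 <= p < pow2 M)%Z.
Proof.
  intros Hi Hf Hrange. pose proof (two_pow_pos N). pose proof (two_pow_pos M).
  pose proof (Hf _ (in_cell_left N i)) as E0. pose proof (Hf _ (in_cell_right N i)) as E1.
  pose proof (Hrange _ (in_cell_unit N i _ Hi (in_cell_left N i))) as R0.
  pose proof (Hrange _ (in_cell_unit N i _ Hi (in_cell_right N i))) as R1.
  replace (IZR i / 2 ^ N * 2 ^ N) with (IZR i) in E0 by (field; lra).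
  replace ((IZR i + 1) / 2 ^ N * 2 ^ N) with (IZR i + 1) in E1 by (field; lra).
  split.
  - apply le_IZR. nra.
  - apply lt_IZR. rewrite IZR_pow2. nra.
Qed.

Lemma cell_affine_refine f N L d : cell_affine f N L -> cell_affine f (N + d) (L + d).
Proof.
  intros Hf i Hi. rewrite pow2_add in Hi. pose proof (pow2_pos d).
  assert (Hq : (0 <= i / pow2 d < pow2 N)%Z)
    by (split; [apply Z.div_pos | apply Z.div_lt_upper_bound]; lia).
  destruct (Hf _ Hq) as [M [p [HM Hp]]].
  exists (M + d)%nat, (p * pow2 d + i mod pow2 d)%Z. split; [lia |].
  now apply maps_cell_child.
Qed.

Lemma cell_affine_weaken f N L L' : (L' <= L)%nat -> cell_affine f N L -> cell_affine f N L'.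
Proof.
  intros HL Hf i Hi. destruct (Hf i Hi) as [M [p [HM Hp]]]. exists M, p. split; [lia | exact Hp].
Qed.

Lemma uniform_bound (P : nat -> nat -> Prop) N :
  (forall j k k', (k <= k')%nat -> P j k -> P j k') ->
  (forall j, (j < N)%nat -> exists k, P j k) -> exists B, forall j, (j < N)%nat -> P j B.
Proof.
  intros Hmono H. induction N as [|N IH].
  - exists 0%nat. lia.
  - destruct IH as [B HB]; [intros j Hj; apply H; lia |].
    destruct (H N) as [k Hk]; [lia |].
    exists (Nat.max B k). intros j Hj.
    destruct (Nat.eq_dec j N) as [-> | Hne].
    + apply Hmono with k; [lia | exact Hk].
    + apply Hmono with B; [lia | apply HB; lia].
Qed.

Lemma cell_affine_bound f N L : cell_affine f N L -> exists B, forall i, (0 <= i < pow2 N)%Z ->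
  exists M p, (L <= M <= B)%nat /\ maps_cell f N i M p.
Proof.
  intro Hf. pose proof (pow2_pos N).
  destruct (uniform_bound
              (fun j B => exists M p, (L <= M <= B)%nat /\ maps_cell f N (Z.of_nat j) M p)
              (Z.to_nat (pow2 N))) as [B HB].
  - intros j k k' Hk [M [p [HM Hp]]]. exists M, p. split; [lia | exact Hp].
  - intros j Hj. destruct (Hf (Z.of_nat j)) as [M [p [HM Hp]]]; [lia |].
    exists M, M, p. split; [lia | exact Hp].
  - exists B. intros i Hi. replace i with (Z.of_nat (Z.to_nat i)) by lia. apply HB. lia.
Qed.

Lemma cell_affine_comp f g Nf Ng : cell_affine f Nf 0 -> cell_affine g Ng 0 ->
  (forall t, 0 <= t <= 1 -> 0 <= g t <= 1) -> cell_affine (comp f g) (Ng + Nf) 0.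
Proof.
  intros Hf Hg Hrange i Hi.
  destruct (cell_affine_refine g Ng 0 Nf Hg i Hi) as [M [p [HM Hgp]]].
  pose proof (maps_cell_range g _ i M p Hi Hgp Hrange) as Hp.
  set (e := (M - Nf)%nat). replace M with (Nf + e)%nat in * by lia.
  rewrite pow2_add in Hp. pose proof (pow2_pos e).
  assert (Hj : (0 <= p / pow2 e < pow2 Nf)%Z)
    by (split; [apply Z.div_pos | apply Z.div_lt_upper_bound]; lia).
  destruct (Hf _ Hj) as [Mq [q [_ Hfq]]].
  exists (Mq + e)%nat, (q * pow2 e + p mod pow2 e)%Z. split; [lia |].
  apply maps_cell_comp with (Nf + e)%nat p; [exact Hgp | now apply maps_cell_child].
Qed.

Lemma parent_of_midpoint M e p q : in_cell M p ((IZR q + / 2) / 2 ^ (M + e)) ->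
  (q / pow2 e)%Z = p.
Proof.
  unfold in_cell. rewrite pow_add. pose proof (two_pow_pos M). pose proof (two_pow_pos e).
  replace ((IZR q + / 2) / (2 ^ M * 2 ^ e) * 2 ^ M) with ((IZR q + / 2) / 2 ^ e) by (field; lra).
  intros [H1 H2].
  apply Rmult_le_compat_r with (r := 2 ^ e) in H1, H2; try lra.
  replace ((IZR q + / 2) / 2 ^ e * 2 ^ e) with (IZR q + / 2) in H1, H2 by (field; lra).
  rewrite <- IZR_pow2, <- mult_IZR in H1. rewrite <- IZR_pow2, <- plus_IZR, <- mult_IZR in H2.
  assert (Hlo : (p * pow2 e <= q)%Z).
  { destruct (Z_le_gt_dec (p * pow2 e) q) as [| Hgt]; [assumption |].
    assert (IZR (q + 1) <= IZR (p * pow2 e)) by (apply IZR_le; lia). rewrite plus_IZR in *. lra. }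
  assert (Hhi : (q < (p + 1) * pow2 e)%Z).
  { destruct (Z_lt_ge_dec q ((p + 1) * pow2 e)) as [| Hge]; [assumption |].
    assert (IZR ((p + 1) * pow2 e) <= IZR q) by (apply IZR_le; lia). lra. }
  symmetry. apply Z.div_unique with (q - p * pow2 e)%Z; lia.
Qed.

(* The image levels are at most [B], so every level-[B] cell lies in a single image
   cell, namely the one containing its midpoint. *)
Lemma cell_affine_inv f g N : cell_affine f N 0 -> bij01 f -> (forall x, g (f x) = x) ->
  exists L, cell_affine g L 0.
Proof.
  intros Hf [_ [_ Honto]] Hg. destruct (cell_affine_bound f N 0 Hf) as [B HB].
  exists B. intros q Hq. pose proof (two_pow_pos B).
  assert (Hy : 0 <= (IZR q + / 2) / 2 ^ B <= 1).
  { assert (0 <= IZR q) by (apply IZR_le; lia).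
    assert (IZR q + 1 <= 2 ^ B) by (rewrite <- IZR_pow2, <- plus_IZR; apply IZR_le; lia).
    split; [apply Rle_mult_inv_pos; lra | apply Rle_div_l; lra]. }
  destruct (Honto _ Hy) as [x [Hx Hfx]].
  destruct (cell_of N x Hx) as [i [Hi Hxi]].
  destruct (HB i Hi) as [M [p [HM Hfp]]].
  set (e := (B - M)%nat). replace B with (M + e)%nat in * by lia.
  pose proof (maps_cell_image f N i M p x Hfp Hxi) as Hy'. rewrite Hfx in Hy'.
  exists (N + e)%nat, (i * pow2 e + q mod pow2 e)%Z. split; [lia |].
  apply maps_cell_child. rewrite (parent_of_midpoint M e p q Hy').
  now apply maps_cell_inv with f.
Qed.

Definition reflect (f : R -> R) : R -> R := fun t => 1 - f (1 - t).

Lemma cell_affine_reflect f N L : cell_affine f N L -> cell_affine (reflect f) N L.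
Proof.
  intros Hf i Hi. destruct (Hf (pow2 N - 1 - i)%Z) as [M [p [HM Hp]]]; [lia |].
  exists M, (pow2 M - 1 - p)%Z. split; [exact HM |].
  intros t Ht. unfold reflect.
  assert (Ht' : in_cell N (pow2 N - 1 - i) (1 - t)).
  { unfold in_cell in *. rewrite !minus_IZR, IZR_pow2. lra. }
  rewrite Rmult_minus_distr_r, (Hp _ Ht'), !minus_IZR, !IZR_pow2. ring.
Qed.

(** * Dyadic piecewise linear maps *)

Definition on_grid (L : nat) (x : R) : Prop := exists z, x * 2 ^ L = IZR z.

Lemma on_grid_mono L L' x : (L <= L')%nat -> on_grid L x -> on_grid L' x.
Proof.
  intros HL [z Hz]. set (d := (L' - L)%nat). replace L' with (L + d)%nat by lia.
  exists (z * pow2 d)%Z. rewrite pow_add, mult_IZR, IZR_pow2, <- Hz. ring.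
Qed.

Lemma on_grid_of_dyadic x : dyadic x -> exists L, on_grid L x.
Proof.
  intros [m [k ->]]. exists k, m. pose proof (two_pow_pos k). field. lra.
Qed.

Lemma dyadic_of_on_grid L x : on_grid L x -> dyadic x.
Proof.
  intros [z Hz]. exists z, L. rewrite <- Hz. pose proof (two_pow_pos L). field. lra.
Qed.

Lemma dyadic_lin x y (c : Z) : dyadic x -> dyadic y -> dyadic (x + IZR c * y).
Proof.
  intros Hx Hy.
  destruct (on_grid_of_dyadic x Hx) as [L1 H1]. destruct (on_grid_of_dyadic y Hy) as [L2 H2].
  apply (on_grid_mono L1 (L1 + L2)) in H1; [| lia].
  apply (on_grid_mono L2 (L1 + L2)) in H2; [| lia].
  destruct H1 as [z1 E1]. destruct H2 as [z2 E2].
  apply dyadic_of_on_grid with (L1 + L2)%nat. exists (z1 + c * z2)%Z.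
  rewrite plus_IZR, mult_IZR, <- E1, <- E2. ring.
Qed.

Lemma dyadic_scale a x : dyadic x -> dyadic (powerRZ 2 a * x).
Proof.
  intros [m [k ->]]. destruct (Z_le_gt_dec 0 a).
  - exists (m * pow2 (Z.to_nat a))%Z, k.
    rewrite mult_IZR, IZR_pow2, (pow_powerRZ 2 (Z.to_nat a)), Z2Nat.id by lia. field.
    pose proof (two_pow_pos k). lra.
  - exists m, (k + Z.to_nat (- a))%nat.
    rewrite pow_add, (pow_powerRZ 2 (Z.to_nat (- a))), Z2Nat.id by lia.
    rewrite powerRZ_neg'.
    pose proof (two_pow_pos k). pose proof (powerRZ_lt 2 a ltac:(lra)). field. lra.
Qed.

Section PiecewiseLinear.
Variables (f : R -> R) (N : nat) (x : nat -> R) (a : nat -> Z) (b : nat -> R).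
Hypothesis x_0 : x 0%nat = 0.
Hypothesis x_N : x N = 1.
Hypothesis x_dyadic : forall i, (i <= N)%nat -> dyadic (x i).
Hypothesis x_incr : forall i, (i < N)%nat -> x i < x (S i).
Hypothesis f_piece : forall i, (i < N)%nat -> forall t, x i <= t <= x (S i) ->
  f t = powerRZ 2 (a i) * t + b i.

Lemma breakpoint_nonneg j : (j <= N)%nat -> 0 <= x j.
Proof.
  induction j as [|j IH]; intro Hj; [lra |].
  specialize (x_incr j ltac:(lia)). specialize (IH ltac:(lia)). lra.
Qed.

Lemma f_on_piece j t : (j < N)%nat -> x j <= t <= x (S j) ->
  f t = f (x j) + powerRZ 2 (a j) * (t - x j).
Proof.
  intros Hj Ht. pose proof (x_incr j Hj).
  rewrite (f_piece j Hj t Ht), (f_piece j Hj (x j)) by lra. ring.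
Qed.

Lemma f_piece_mono j t : (j < N)%nat -> x j <= t <= x (S j) -> f (x j) <= f t <= f (x (S j)).
Proof.
  intros Hj Ht. pose proof (x_incr j Hj). pose proof (powerRZ_lt 2 (a j) ltac:(lra)).
  rewrite (f_on_piece j t Hj Ht), (f_on_piece j (x (S j)) Hj) by lra. nra.
Qed.

Lemma f_mono_below j : (j <= N)%nat -> forall t, 0 <= t <= x j -> f 0 <= f t <= f (x j).
Proof.
  induction j as [|j IH]; intros Hj t Ht.
  - rewrite x_0 in *. replace t with 0 by lra. lra.
  - pose proof (x_incr j ltac:(lia)). pose proof (breakpoint_nonneg j ltac:(lia)).
    pose proof (f_piece_mono j (x (S j)) ltac:(lia) ltac:(lra)).
    specialize (IH ltac:(lia)).
    destruct (Rle_dec t (x j)).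
    + specialize (IH t ltac:(lra)). lra.
    + pose proof (f_piece_mono j t ltac:(lia) ltac:(lra)). specialize (IH (x j) ltac:(lra)). lra.
Qed.

Hypothesis f_bij : bij01 f.

Lemma PL_fix_0 : f 0 = 0.
Proof.
  destruct f_bij as [Hrange [_ Honto]]. destruct (Honto 0 ltac:(lra)) as [y [Hy Hfy]].
  pose proof (f_mono_below N ltac:(lia) y ltac:(rewrite x_N; lra)).
  pose proof (Hrange 0 ltac:(lra)). lra.
Qed.

Lemma PL_fix_1 : f 1 = 1.
Proof.
  destruct f_bij as [Hrange [_ Honto]]. destruct (Honto 1 ltac:(lra)) as [y [Hy Hfy]].
  pose proof (f_mono_below N ltac:(lia) y ltac:(rewrite x_N; lra)). rewrite x_N in *.
  pose proof (Hrange 1 ltac:(lra)). lra.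
Qed.

Lemma f_breakpoint_dyadic j : (j <= N)%nat -> dyadic (f (x j)).
Proof.
  induction j as [|j IH]; intro Hj.
  - rewrite x_0, PL_fix_0. exists 0%Z, 0%nat. simpl. lra.
  - rewrite (f_on_piece j (x (S j))) by (try pose proof (x_incr j ltac:(lia)); lia || lra).
    replace (f (x j) + powerRZ 2 (a j) * (x (S j) - x j))
      with (f (x j) + IZR 1 * (powerRZ 2 (a j) * (x (S j) + IZR (-1) * x j))) by (simpl; ring).
    apply dyadic_lin; [apply IH; lia |]. apply dyadic_scale, dyadic_lin; apply x_dyadic; lia.
Qed.

Lemma piece_of t : 0 <= t < 1 -> exists j, (j < N)%nat /\ x j <= t < x (S j).
Proof.
  intro Ht.
  assert (H : forall m, (m <= N)%nat -> t < x m -> exists j, (j < m)%nat /\ x j <= t < x (S j)).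
  { induction m as [|m IH]; intros Hm Htm; [rewrite x_0 in Htm; lra |].
    destruct (Rlt_dec t (x m)) as [Hlt | Hge].
    - destruct (IH ltac:(lia) Hlt) as [j [Hj Hjt]]. exists j. split; [lia | exact Hjt].
    - exists m. split; [lia | lra]. }
  destruct (H N ltac:(lia) ltac:(rewrite x_N; lra)) as [j Hj]. now exists j.
Qed.

Lemma maps_cell_in_piece j L M i : (j < N)%nat -> (a j + Z.of_nat M)%Z = Z.of_nat L ->
  on_grid M (f (x j)) -> on_grid L (x j) -> on_grid L (x (S j)) ->
  x j <= IZR i / 2 ^ L < x (S j) -> exists p, maps_cell f L i M p.
Proof.
  intros Hj HaML [w Ew] [y1 Ey1] [y2 Ey2] [Hxj1 Hxj2]. pose proof (two_pow_pos L) as HL.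
  assert (Hy1 : (y1 <= i)%Z) by (apply le_IZR; rewrite <- Ey1; now apply Rle_div_r).
  assert (Hy2 : (i < y2)%Z) by (apply lt_IZR; rewrite <- Ey2; now apply Rlt_div_l).
  exists (w + i - y1)%Z. intros t [Ht1 Ht2].
  assert (Htj : x j <= t <= x (S j)).
  { apply (Rle_trans _ _ (IZR y2)) in Ht2; [| rewrite <- plus_IZR; apply IZR_le; lia].
    apply (Rle_trans (IZR y1)) in Ht1; [| apply IZR_le; lia].
    split; apply (Rmult_le_reg_r (2 ^ L)); lra. }
  rewrite (f_on_piece j t Hj Htj), Rmult_plus_distr_r, Ew, Rmult_assoc, (Rmult_comm (t - x j)),
    <- Rmult_assoc, (powerRZ_two_pow _ M L HaML).
  rewrite !minus_IZR, plus_IZR, <- Ey1. ring.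
Qed.

(* [L0] puts all breakpoints and their images on the grid and [A] bounds the slope
   exponents, so each level-[L0 + A] cell lies in a single piece [j] and is mapped onto a
   cell of level [L0 + A - a j >= L0]. *)
Lemma PL_cell_affine : exists L, cell_affine f L 0.
Proof.
  destruct (uniform_bound (fun j k => on_grid k (x j) /\ on_grid k (f (x j))) (S N)) as [L0 HL0].
  { intros j k k' Hk [H1 H2]. split; eapply on_grid_mono; eauto. }
  { intros j Hj.
    destruct (on_grid_of_dyadic _ (x_dyadic j ltac:(lia))) as [k1 H1].
    destruct (on_grid_of_dyadic _ (f_breakpoint_dyadic j ltac:(lia))) as [k2 H2].
    exists (Nat.max k1 k2).
    split; [apply (on_grid_mono k1) | apply (on_grid_mono k2)]; auto; lia. }
  destruct (uniform_bound (fun j k => (a j <= Z.of_nat k)%Z) N) as [A HA].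
  { intros j k k' Hk H. lia. }
  { intros j Hj. exists (Z.to_nat (a j)). lia. }
  exists (L0 + A)%nat. intros i Hi. pose proof (two_pow_pos (L0 + A)).
  assert (Hc : 0 <= IZR i / 2 ^ (L0 + A) < 1).
  { assert (IZR i + 1 <= 2 ^ (L0 + A)) by (rewrite <- IZR_pow2, <- plus_IZR; apply IZR_le; lia).
    assert (0 <= IZR i) by (apply IZR_le; lia).
    split; [apply Rle_mult_inv_pos | apply Rlt_div_l]; lra. }
  destruct (piece_of _ Hc) as [j [Hj Hxj]].
  destruct (HL0 j ltac:(lia)) as [Hgx Hgf]. destruct (HL0 (S j) ltac:(lia)) as [Hgx' _].
  specialize (HA j Hj).
  set (M := (L0 + Z.to_nat (Z.of_nat A - a j))%nat).
  destruct (maps_cell_in_piece j (L0 + A) M i Hj) as [p Hp];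
    [unfold M; lia | apply (on_grid_mono L0); [unfold M; lia | exact Hgf] |
     apply (on_grid_mono L0); [lia | exact Hgx] | apply (on_grid_mono L0); [lia | exact Hgx'] |
     exact Hxj |].
  exists M, p. split; [lia | exact Hp].
Qed.

End PiecewiseLinear.

Lemma cell_affine_PL f N L : cell_affine f N L -> PL_dyadic f.
Proof.
  intro Hf.
  destruct (functional_choice (fun (j : nat) (Mp : nat * Z) => (j < Z.to_nat (pow2 N))%nat ->
              maps_cell f N (Z.of_nat j) (fst Mp) (snd Mp))) as [F HF].
  { intro j. destruct (lt_dec j (Z.to_nat (pow2 N))) as [Hj | Hj].
    - destruct (Hf (Z.of_nat j)) as [M [p [_ Hp]]]; [lia |]. now exists (M, p).
    - exists (0%nat, 0%Z). intro; lia. }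
  exists (Z.to_nat (pow2 N)), (fun j => INR j / 2 ^ N),
    (fun j => (Z.of_nat N - Z.of_nat (fst (F j)))%Z),
    (fun j => (IZR (snd (F j)) - INR j) / 2 ^ fst (F j)).
  repeat split.
  - simpl. lra.
  - apply grid_last.
  - intros j _. exists (Z.of_nat j), N. now rewrite INR_IZR_INZ.
  - intros j _. apply grid_lt.
  - intros j Hj t Ht. pose proof (two_pow_pos (fst (F j))).
    assert (Hpow : powerRZ 2 (Z.of_nat N - Z.of_nat (fst (F j))) * 2 ^ fst (F j) = 2 ^ N)
      by (apply powerRZ_two_pow; lia).
    apply (Rmult_eq_reg_r (2 ^ fst (F j))); [| lra].
    rewrite (HF j Hj t (in_cell_grid N j t Ht)), <- INR_IZR_INZ, Rmult_plus_distr_r, <- Hpow.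
    field. lra.
Qed.

Lemma inF_cell_affine f : inF f -> exists N, cell_affine f N 0.
Proof.
  intros [_ [Hb [N [x [a [b [H0 [H1 [Hd [Hi Hp]]]]]]]]]].
  exact (PL_cell_affine f N x a b H0 H1 Hd Hi Hp Hb).
Qed.

Lemma inF_fix_0 f : inF f -> f 0 = 0.
Proof.
  intros [_ [Hb [N [x [a [b [H0 [H1 [_ [Hi Hp]]]]]]]]]]. exact (PL_fix_0 f N x a b H0 H1 Hi Hp Hb).
Qed.

Lemma inF_fix_1 f : inF f -> f 1 = 1.
Proof.
  intros [_ [Hb [N [x [a [b [H0 [H1 [_ [Hi Hp]]]]]]]]]]. exact (PL_fix_1 f N x a b H0 H1 Hi Hp Hb).
Qed.

Lemma inF_id : inF (fun x => x).
Proof.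
  split; [auto | split].
  - split; [auto | split; [auto | intros y Hy; now exists y]].
  - apply (cell_affine_PL _ 0 0). intros i Hi. exists 0%nat, i. split; [lia |].
    intros t _. simpl. ring.
Qed.

Lemma inF_comp f g : inF f -> inF g -> inF (comp f g).
Proof.
  intros Hf Hg.
  destruct (inF_cell_affine f Hf) as [Nf Tf]. destruct (inF_cell_affine g Hg) as [Ng Tg].
  destruct Hf as [Of [[Rf [If Sf]] _]]. destruct Hg as [Og [[Rg [Ig Sg]] _]].
  split; [| split; [split; [| split] |]]; unfold comp.
  - intros t Ht. rewrite Og by exact Ht. now apply Of.
  - intros t Ht. now apply Rf, Rg.
  - intros s t Hs Ht E. apply Ig; [exact Hs | exact Ht |].
    apply If; [now apply Rg | now apply Rg | exact E].
  - intros y Hy. destruct (Sf y Hy) as [z [Hz <-]]. destruct (Sg z Hz) as [t [Ht <-]].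
    now exists t.
  - apply (cell_affine_PL _ (Ng + Nf) 0). now apply cell_affine_comp.
Qed.

Lemma inF_inv f g : inF f -> (forall x, g (f x) = x) -> inF g.
Proof.
  intros Hf Hg. destruct (inF_cell_affine f Hf) as [N Tf].
  destruct Hf as [Of [Bf _]]. pose proof Bf as [Rf [If Sf]].
  split; [| split; [split; [| split] |]].
  - intros t Ht. rewrite <- (Of t Ht) at 1. apply Hg.
  - intros y Hy. destruct (Sf y Hy) as [x [Hx <-]]. now rewrite Hg.
  - intros y1 y2 H1 H2 E.
    destruct (Sf y1 H1) as [x1 [_ <-]]. destruct (Sf y2 H2) as [x2 [_ <-]].
    rewrite !Hg in E. now subst.
  - intros x Hx. exists (f x). split; [now apply Rf | apply Hg].
  - destruct (cell_affine_inv f g N Tf Bf Hg) as [L HL]. exact (cell_affine_PL g L 0 HL).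
Qed.

(** * Slopes at the endpoints *)

Definition slope0 (f : R -> R) (s : Z) : Prop :=
  exists eps, 0 < eps /\ forall t, 0 <= t <= eps -> f t = powerRZ 2 s * t.

Definition slope1 (f : R -> R) (s : Z) : Prop := slope0 (reflect f) s.

Lemma slope0_ext f g s : (forall t, f t = g t) -> slope0 f s -> slope0 g s.
Proof.
  intros Hfg [eps [He H]]. exists eps. split; [exact He |]. intros t Ht. rewrite <- Hfg. auto.
Qed.

Lemma slope0_comp f g s r : slope0 f s -> slope0 g r -> slope0 (comp f g) (s + r).
Proof.
  intros [e1 [He1 H1]] [e2 [He2 H2]]. pose proof (powerRZ_lt 2 r ltac:(lra)) as Pr.
  exists (Rmin e2 (e1 / powerRZ 2 r)). split.
  - apply Rmin_glb_lt; [exact He2 | apply Rdiv_lt_0_compat; lra].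
  - intros t Ht.
    pose proof (Rmin_l e2 (e1 / powerRZ 2 r)). pose proof (Rmin_r e2 (e1 / powerRZ 2 r)).
    unfold comp. rewrite H2 by lra. rewrite H1.
    + rewrite powerRZ_add by lra. ring.
    + split; [apply Rmult_le_pos; lra |]. rewrite Rmult_comm. apply Rle_div_r; lra.
Qed.

Lemma slope0_inv f g s : slope0 f s -> (forall x, g (f x) = x) -> slope0 g (- s).
Proof.
  intros [e [He H]] Hg. pose proof (powerRZ_lt 2 s ltac:(lra)) as Ps.
  exists (powerRZ 2 s * e). split; [now apply Rmult_lt_0_compat |].
  intros y Hy. rewrite powerRZ_neg'.
  assert (Hx : 0 <= y / powerRZ 2 s <= e)
    by (split; [apply Rle_mult_inv_pos | apply Rle_div_l]; lra).
  replace y with (f (y / powerRZ 2 s)) at 1 by (rewrite H by exact Hx; field; lra).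
  rewrite Hg. field. lra.
Qed.

Lemma slope1_comp f g s r : slope1 f s -> slope1 g r -> slope1 (comp f g) (s + r).
Proof.
  intros Hf Hg. apply slope0_ext with (comp (reflect f) (reflect g)); [| now apply slope0_comp].
  intro t. unfold comp, reflect. now replace (1 - (1 - g (1 - t))) with (g (1 - t)) by ring.
Qed.

Lemma slope1_inv f g s : slope1 f s -> (forall x, g (f x) = x) -> slope1 g (- s).
Proof.
  intros Hf Hg. apply (slope0_inv (reflect f)); [exact Hf |].
  intro x. unfold reflect. replace (1 - (1 - f (1 - x))) with (f (1 - x)) by ring.
  rewrite Hg. ring.
Qed.

Lemma slope0_of_cell_affine f N L : cell_affine f N L -> f 0 = 0 -> exists s, slope0 f s.
Proof.
  intros Hf Hf0. destruct (Hf 0%Z ltac:(pose proof (pow2_pos N); lia)) as [M [p [_ Hp]]].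
  pose proof (two_pow_pos N). pose proof (two_pow_pos M).
  assert (Hp0 : IZR p = 0).
  { pose proof (Hp 0 ltac:(unfold in_cell; simpl; lra)) as E. rewrite Hf0 in E. lra. }
  exists (Z.of_nat N - Z.of_nat M)%Z, (/ 2 ^ N). split; [now apply Rinv_0_lt_compat |].
  intros t Ht.
  assert (Ht' : in_cell N 0 t).
  { unfold in_cell. simpl. split; [nra |].
    replace (0 + 1) with (/ 2 ^ N * 2 ^ N) by (field; lra). apply Rmult_le_compat_r; lra. }
  pose proof (powerRZ_two_pow (Z.of_nat N - Z.of_nat M) M N ltac:(lia)) as Hpow.
  apply (Rmult_eq_reg_r (2 ^ M)); [| lra].
  rewrite (Hp t Ht'), Hp0, <- Hpow. ring.
Qed.

Lemma inF_slope0 f : inF f -> exists s, slope0 f s.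
Proof.
  intro Hf. destruct (inF_cell_affine f Hf) as [N HN].
  exact (slope0_of_cell_affine f N 0 HN (inF_fix_0 f Hf)).
Qed.

Lemma inF_slope1 f : inF f -> exists s, slope1 f s.
Proof.
  intro Hf. destruct (inF_cell_affine f Hf) as [N HN].
  apply (slope0_of_cell_affine _ N 0); [now apply cell_affine_reflect |].
  unfold reflect. rewrite Rminus_0_r, (inF_fix_1 f Hf). ring.
Qed.

Definition id_near_ends (f : R -> R) : Prop := inF f /\ slope0 f 0 /\ slope1 f 0.

Lemma id_near_ends_id : id_near_ends (fun x => x).
Proof.
  split; [exact inF_id | split; exists 1; split; try lra; intros t _; unfold reflect; simpl; ring].
Qed.

Lemma id_near_ends_comp f g : id_near_ends f -> id_near_ends g -> id_near_ends (comp f g).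
Proof.
  intros [Ff [Af Bf]] [Fg [Ag Bg]]. split; [now apply inF_comp | split].
  - exact (slope0_comp f g 0 0 Af Ag).
  - exact (slope1_comp f g 0 0 Bf Bg).
Qed.

Lemma id_near_ends_inv f g : id_near_ends f -> (forall x, g (f x) = x) -> id_near_ends g.
Proof.
  intros [Ff [Af Bf]] Hg. split; [now apply (inF_inv f) | split].
  - exact (slope0_inv f g 0 Af Hg).
  - exact (slope1_inv f g 0 Bf Hg).
Qed.

Lemma id_near_ends_commutator a a' b b' : inF a -> inF b ->
  (forall x, a' (a x) = x) -> (forall x, b' (b x) = x) ->
  id_near_ends (comp a' (comp b' (comp a b))).
Proof.
  intros Ha Hb Ha' Hb'.
  destruct (inF_slope0 a Ha) as [sa Sa]. destruct (inF_slope0 b Hb) as [sb Sb].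
  destruct (inF_slope1 a Ha) as [ta Ta]. destruct (inF_slope1 b Hb) as [tb Tb].
  split; [| split].
  - apply inF_comp; [now apply (inF_inv a) |]. apply inF_comp; [now apply (inF_inv b) |].
    now apply inF_comp.
  - replace 0%Z with (- sa + (- sb + (sa + sb)))%Z by ring.
    apply slope0_comp; [now apply (slope0_inv a) |].
    apply slope0_comp; [now apply (slope0_inv b) |].
    now apply slope0_comp.
  - replace 0%Z with (- ta + (- tb + (ta + tb)))%Z by ring.
    apply slope1_comp; [now apply (slope1_inv a) |].
    apply slope1_comp; [now apply (slope1_inv b) |].
    now apply slope1_comp.
Qed.

Lemma derivedF_id_near_ends f : derivedF f -> id_near_ends f.
Proof.
  induction 1.
  - now apply id_near_ends_commutator.
  - exact id_near_ends_id.
  - now apply id_near_ends_comp.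
  - now apply (id_near_ends_inv f).
Qed.

(** * Agreement with K on dyadic intervals *)

Fixpoint word (N : nat) (i : Z) : list bool :=
  match N with
  | O => nil
  | S N' => if Z.ltb i (pow2 N') then false :: word N' i else true :: word N' (i - pow2 N')
  end.

Lemma word_length N i : length (word N i) = N.
Proof.
  revert i; induction N as [|N IH]; intro i; [reflexivity |].
  simpl. destruct (Z.ltb i (pow2 N)); simpl; now rewrite IH.
Qed.

Lemma word_value_word N i : (0 <= i < pow2 N)%Z -> word_value (word N i) * 2 ^ N = IZR i.
Proof.
  revert i; induction N as [|N IH]; intros i Hi.
  - unfold pow2 in Hi. simpl in *. replace i with 0%Z by lia. simpl. ring.
  - rewrite pow2_S in Hi. simpl. pose proof (two_pow_pos N).
    destruct (Z.ltb_spec i (pow2 N)).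
    + simpl. rewrite <- (IH i) by lia. field.
    + simpl.
      replace (IZR i) with (IZR (i - pow2 N)%Z + 2 ^ N) by (rewrite minus_IZR, IZR_pow2; ring).
      rewrite <- (IH (i - pow2 N)%Z) by lia. field.
Qed.

Lemma word_has_true N i : (1 <= i < pow2 N)%Z -> In true (word N i).
Proof.
  revert i; induction N as [|N IH]; intros i Hi; [unfold pow2 in Hi; simpl in Hi; lia |].
  rewrite pow2_S in Hi. simpl. destruct (Z.ltb_spec i (pow2 N)); [right; apply IH; lia | now left].
Qed.

Lemma word_has_false N i : (0 <= i <= pow2 N - 2)%Z -> In false (word N i).
Proof.
  revert i; induction N as [|N IH]; intros i Hi; [unfold pow2 in Hi; simpl in Hi; lia |].
  rewrite pow2_S in Hi. simpl. destruct (Z.ltb_spec i (pow2 N)); [now left | right; apply IH; lia].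
Qed.

Lemma maps_cell_branches f h N i M p : (0 <= i < pow2 N)%Z -> (0 <= p < pow2 M)%Z ->
  maps_cell f N i M p -> has_branches h (word N i) (word M p) ->
  forall t, in_cell N i t -> f t = h t.
Proof.
  intros Hi Hp Hf Hh t Ht. pose proof (two_pow_pos N). pose proof (two_pow_pos M).
  destruct (bin_val_onto (t * 2 ^ N - IZR i)) as [a Ha]; [destruct Ht; lra |].
  assert (Et : bin_val (prepend (word N i) a) = t).
  { rewrite bin_val_prepend, word_length, Ha.
    apply (Rmult_eq_reg_r (2 ^ N)); [| lra].
    rewrite Rmult_plus_distr_r, (word_value_word N i Hi). field. lra. }
  rewrite <- Et at 2. rewrite Hh, bin_val_prepend, word_length, Ha.
  apply (Rmult_eq_reg_r (2 ^ M)); [| lra].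
  rewrite (Hf t Ht), Rmult_plus_distr_r, (word_value_word M p Hp). field. lra.
Qed.

Lemma maps_cell_interior f N i M p : bij01 f -> f 0 = 0 -> f 1 = 1 ->
  (0 < i < pow2 N - 1)%Z -> maps_cell f N i M p -> (0 < p < pow2 M - 1)%Z.
Proof.
  intros [Hrange [Hinj _]] Hfix0 Hfix1 Hi Hf.
  pose proof (two_pow_pos N). pose proof (two_pow_pos M).
  destruct (maps_cell_range f N i M p ltac:(lia) Hf Hrange) as [Hp0 HpM].
  pose proof (in_cell_unit N i _ ltac:(lia) (in_cell_left N i)) as Hl.
  pose proof (in_cell_unit N i _ ltac:(lia) (in_cell_right N i)) as Hr.
  split.
  - destruct (Z.eq_dec p 0) as [-> | ]; [exfalso | lia].
    assert (E : f (IZR i / 2 ^ N) = f 0).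
    { rewrite Hfix0. apply (Rmult_eq_reg_r (2 ^ M)); [| lra].
      rewrite (Hf _ (in_cell_left N i)). field. lra. }
    apply Hinj in E; [| exact Hl | lra].
    assert (Ei : IZR i = 0)
      by (apply (Rmult_eq_reg_r (/ 2 ^ N)); [lra | apply Rinv_neq_0_compat; lra]).
    apply eq_IZR in Ei. lia.
  - destruct (Z.eq_dec p (pow2 M - 1)) as [-> | ]; [exfalso | lia].
    assert (E : f ((IZR i + 1) / 2 ^ N) = f 1).
    { rewrite Hfix1. apply (Rmult_eq_reg_r (2 ^ M)); [| lra].
      rewrite (Hf _ (in_cell_right N i)), minus_IZR, IZR_pow2. field. lra. }
    apply Hinj in E; [| exact Hr | lra].
    assert (Ei : IZR (i + 1) = IZR (pow2 N)).
    { rewrite plus_IZR, IZR_pow2.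
      apply (Rmult_eq_reg_r (/ 2 ^ N)); [| apply Rinv_neq_0_compat; lra].
      rewrite Rinv_r by lra. exact E. }
    apply eq_IZR in Ei. lia.
Qed.

Lemma slope0_id_first_cell f : slope0 f 0 ->
  exists D, forall N, (D <= N)%nat -> forall t, in_cell N 0 t -> f t = t.
Proof.
  intros [eps [He Hf]].
  destruct (pow_lt_1_zero (/ 2) ltac:(rewrite Rabs_pos_eq; lra) eps He) as [D HD].
  exists D. intros N HN t [Ht0 Ht1]. pose proof (two_pow_pos N).
  specialize (HD N HN). rewrite Rabs_pos_eq, pow_inv in HD by (apply pow_le; lra).
  rewrite Hf; [simpl; ring |]. simpl in Ht0, Ht1. split; [nra |].
  apply Rle_trans with (/ 2 ^ N); [| lra].
  apply (Rmult_le_reg_r (2 ^ N)); [lra |]. rewrite Rinv_l; lra.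
Qed.

Lemma slope1_id_last_cell f : slope1 f 0 ->
  exists D, forall N, (D <= N)%nat -> forall t, in_cell N (pow2 N - 1) t -> f t = t.
Proof.
  intro Hf. destruct (slope0_id_first_cell (reflect f) Hf) as [D HD].
  exists D. intros N HN t Ht.
  assert (Ht' : in_cell N 0 (1 - t))
    by (unfold in_cell in *; rewrite minus_IZR, IZR_pow2 in Ht; simpl; lra).
  pose proof (HD N HN (1 - t) Ht') as E. unfold reflect in E.
  replace (1 - (1 - t)) with t in E by ring. lra.
Qed.

Lemma Cl_of_cells H f N : inF f ->
  (forall i, (0 <= i < pow2 N)%Z -> exists h, H h /\ forall t, in_cell N i t -> f t = h t) ->
  Cl H f.
Proof.
  intros Hf Hcells. split; [exact Hf |].
  exists (Z.to_nat (pow2 N)), (fun j => INR j / 2 ^ N). repeat split.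
  - simpl. lra.
  - apply grid_last.
  - intros j _. apply grid_lt.
  - intros j Hj. destruct (Hcells (Z.of_nat j)) as [h [Hh Hfh]]; [pose proof (pow2_pos N); lia |].
    exists h. split; [exact Hh |]. intros t Ht. now apply Hfh, in_cell_grid.
Qed.

Theorem id_near_ends_in_closed n K : (1 <= n)%nat -> closed_subgroup K -> Knn_conditions n K ->
  forall f, id_near_ends f -> K f.
Proof.
  intros Hn [HK Hcl] HC f [Hf [S0 S1]].
  destruct (inF_cell_affine f Hf) as [N0 HN0].
  destruct (slope0_id_first_cell f S0) as [D0 HD0]. destruct (slope1_id_last_cell f S1) as [D1 HD1].
  set (N := (N0 + (D0 + D1))%nat).
  assert (HN : cell_affine f N 0)
    by (apply (cell_affine_weaken f N (0 + (D0 + D1))); [lia | now apply cell_affine_refine]).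
  apply Hcl, (Cl_of_cells K f N Hf). intros i Hi.
  pose proof HK as [_ [Hid _]].
  destruct (Z.eq_dec i 0) as [-> | Hi0].
  { exists (fun x => x). split; [exact Hid |]. apply HD0. unfold N. lia. }
  destruct (Z.eq_dec i (pow2 N - 1)) as [-> | Hi1].
  { exists (fun x => x). split; [exact Hid |]. apply HD1. unfold N. lia. }
  destruct (HN i Hi) as [M [p [_ Hfp]]].
  pose proof (maps_cell_interior f N i M p (proj1 (proj2 Hf)) (inF_fix_0 f Hf) (inF_fix_1 f Hf)
                ltac:(lia) Hfp) as Hp.
  destruct (sim_mixed n Hn K HK HC (word N i) (word M p)) as [h [Kh Bh]];
    [apply word_has_true | apply word_has_false | apply word_has_true | apply word_has_false | ];
    try lia.
  exists h. split; [exact Kh |].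
  apply (maps_cell_branches f h N i M p); [lia | lia | exact Hfp | exact Bh].
Qed.

Theorem proposition3p6 (n : nat) (Hn : (1 <= n)%nat) (K : (R -> R) -> Prop) :
  is_Knn n K -> forall f, derivedF f -> K f.
Proof.
  intros [HKc [HKcond _]] f Hf.
  exact (id_near_ends_in_closed n K Hn HKc HKcond f (derivedF_id_near_ends f Hf)).
Qed.
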